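(* Let $d\ge2$, let $A,B$ be $d$-dimensional systems, let $\Phi=|\phi\rangle\langle\phi|$ with $|\phi\rangle=\frac1{\sqrt d}\sum_{i=1}^d|i\rangle_A|i\rangle_B$, and for $0\le\lambda\le1$ let $\rho_{AB}=\lambda\Phi+\frac{1-\lambda}{d^2-1}(\mathbb I-\Phi)$ (an isotropic state). Then $$Q^A_{\mathcal N}(\rho_{AB})=Q^{AB}_{\mathcal N}(\rho_{AB})=\frac{|\lambda d^2-1|}{2(d+1)}.$$
   Context: The negativity of a bipartite state $\tau_{X:Y}$ is $\mathcal N_{X:Y}(\tau)=(\|\tau^\Gamma\|_1-1)/2$ with $\tau^\Gamma$ the partial transpose on one party and $\|\cdot\|_1$ the trace norm. For a system $S$ of dimension $m$ with orthonormal basis $\{|s_k\rangle\}$, the measurement interaction is the isometry $V_S:S\to S\otimes S'$ ($S'$ $m$-dimensional with computational basis $\{|k\rangle\}$), $V_S|s_k\rangle=|s_k\rangle|k\rangle$. One-sided negativity of quantumness: $Q^A_{\mathcal N}(\rho_{AB})=\min\mathcal N_{AB:A'}\big((V_A\otimes\mathbb I_B)\rho_{AB}(V_A\otimes\mathbb I_B)^\dagger\big)$ over orthonormal bases of $A$. Two-sided: $Q^{AB}_{\mathcal N}(\rho_{AB})=\min\mathcal N_{AB:A'B'}\big((V_A\otimes V_B)\rho_{AB}(V_A\otimes V_B)^\dagger\big)$ over orthonormal bases of $A$ and $B$. *)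

From HB Require Import structures.
From mathcomp Require Import all_boot all_order all_algebra.
From mathcomp Require Import mxtens complex.
From mathcomp Require Import reals.

Set Implicit Arguments.
Unset Strict Implicit.
Unset Printing Implicit Defensive.

Import Order.TTheory GRing.Theory Num.Theory.
Local Open Scope ring_scope.

Section QuantumDefs.
Variable C : numClosedFieldType.

Definition adjmx m n (M : 'M[C]_(m, n)) : 'M[C]_(n, m) := (map_mx Num.conj M)^T.

Definition ket d (k : 'I_d) : 'cV[C]_d := delta_mx k 0.

Definition poly_roots (p : {poly C}) : seq C := sval (closed_field_poly_normal p).

(* trace norm: sum of the singular values, i.e. of the square roots of the
   eigenvalues (with algebraic multiplicity) of M^dagger M *)
Definition trnorm n (M : 'M[C]_n) : C :=
  \sum_(z <- poly_roots (char_poly (adjmx M *m M))) sqrtC z.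

Definition orthonormal m (s : 'I_m -> 'cV[C]_m) : Prop :=
  forall j k, adjmx (s j) *m s k = (j == k)%:R%:M.

(* measurement isometry V_S : S -> S (x) S',  V_S |s_k> = |s_k>|k> *)
Definition measV m (s : 'I_m -> 'cV[C]_m) : 'M[C]_(m * m, m) :=
  \sum_(k < m) (s k *t ket k) *m adjmx (s k).

(* one-sided: state on (A (x) A') (x) B ; partial transpose on A' (middle) *)
Definition ptrans_mid a b c (M : 'M[C]_((a * b) * c)) : 'M[C]_((a * b) * c) :=
  \matrix_(i, j)
    let: (i1, ib) := mxtens_unindex i in let: (ia, ix) := mxtens_unindex i1 in
    let: (j1, jb) := mxtens_unindex j in let: (ja, jx) := mxtens_unindex j1 in
    M (mxtens_index (mxtens_index (ia, jx), ib))
      (mxtens_index (mxtens_index (ja, ix), jb)).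

(* two-sided: state on (A (x) A') (x) (B (x) B') ; partial transpose on A'B' *)
Definition ptrans_24 a b c e (M : 'M[C]_((a * b) * (c * e))) : 'M[C]_((a * b) * (c * e)) :=
  \matrix_(i, j)
    let: (i1, i2) := mxtens_unindex i in
    let: (ia, ix) := mxtens_unindex i1 in let: (ib, iy) := mxtens_unindex i2 in
    let: (j1, j2) := mxtens_unindex j in
    let: (ja, jx) := mxtens_unindex j1 in let: (jb, jy) := mxtens_unindex j2 in
    M (mxtens_index (mxtens_index (ia, jx), mxtens_index (ib, jy)))
      (mxtens_index (mxtens_index (ja, ix), mxtens_index (jb, iy))).

Definition negA d (s : 'I_d -> 'cV[C]_d) (rho : 'M[C]_(d * d)) : C :=
  let W := measV s *t (1%:M : 'M[C]_d) in
  (trnorm (ptrans_mid (W *m rho *m adjmx W)) - 1) / 2.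

Definition negAB d (sA sB : 'I_d -> 'cV[C]_d) (rho : 'M[C]_(d * d)) : C :=
  let W := measV sA *t measV sB in
  (trnorm (ptrans_24 (W *m rho *m adjmx W)) - 1) / 2.

Definition is_min T (P : T -> Prop) (f : T -> C) (q : C) : Prop :=
  (exists2 x, P x & f x = q) /\ (forall x, P x -> q <= f x).

Definition is_QA d (rho : 'M[C]_(d * d)) (q : C) : Prop :=
  is_min (@orthonormal d) (fun s => negA s rho) q.

Definition is_QAB d (rho : 'M[C]_(d * d)) (q : C) : Prop :=
  is_min (fun s : ('I_d -> 'cV[C]_d) * ('I_d -> 'cV[C]_d) =>
            orthonormal s.1 /\ orthonormal s.2)
         (fun s => negAB s.1 s.2 rho) q.

Definition max_ent d : 'M[C]_(d * d, 1 * 1) :=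
  (sqrtC d%:R)^-1 *: \sum_(i < d) (ket i *t ket i).

Definition Phi d : 'M[C]_(d * d) := max_ent d *m adjmx (max_ent d).

Definition isotropic d (lam : C) : 'M[C]_(d * d) :=
  lam *: Phi d + ((1 - lam) / (d ^ 2 - 1)%:R) *: (1%:M - Phi d).

End QuantumDefs.

(* Write the measurement isometry of a basis with unitary matrix S as (S ⊗ 1) V S^*, with
   V the computational-basis isometry.  Trace norm and partial transposition commute with
   local unitaries, so each negativity is the computational-basis negativity of G^* ρ G for
   a local unitary G.  For the isotropic state ρ = α Φ + β 1 this is α ψψ^* + β 1 with
   ψ = G^* φ; once measured and partially transposed, it has at most one nonzero entry in
   each row and column (in the one-sided case this needs ψ = φ, arranged by choosing
   G = S ⊗ conj S, which leaves ρ invariant).  Its trace norm is therefore the sum of the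
   moduli of its entries, 1 + |α| ((Σ_x |ψ_x|)² - 1).  As Σ_x |ψ_x|² = 1 and |ψ_x|² <= 1/d,
   this is at least 1 + |α| (d - 1), with equality for ψ = φ, i.e. for the computational
   bases; finally |α| (d - 1) / 2 = |λ d² - 1| / (2 (d + 1)). *)

From Pilot Require Import Defs.
From HB Require Import structures.
From mathcomp Require Import all_boot all_order all_algebra.
From mathcomp Require Import mxtens complex.
From mathcomp Require Import reals.
From mathcomp Require Import ring.
(* Re-imported so that [orthonormal] denotes the definition of Defs, not mathcomp's. *)
Import Defs.
Import Order.TTheory GRing.Theory Num.Theory.
Local Open Scope ring_scope.

Set Implicit Arguments.
Unset Strict Implicit.
Unset Printing Implicit Defensive.

Local Notation tix i j := (mxtens_index (i, j)).

Lemma big_mxtens_index (V : nmodType) m n (F : 'I_(m * n) -> V) :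
  \sum_k F k = \sum_i \sum_j F (tix i j).
Proof.
rewrite pair_big /=; apply: reindex => /=.
by exists (@mxtens_unindex m n) => k _; rewrite (mxtens_indexK, mxtens_unindexK) //; case: k.
Qed.

Section Adjoint.
Variable C : numClosedFieldType.

Lemma adjmxE m n (M : 'M[C]_(m, n)) i j : adjmx M i j = (M j i)^*.
Proof. by rewrite !mxE. Qed.

Lemma adjmxK m n (M : 'M[C]_(m, n)) : adjmx (adjmx M) = M.
Proof. by apply/matrixP=> i j; rewrite !mxE conjCK. Qed.

Lemma adjmxM m n p (A : 'M[C]_(m, n)) (B : 'M[C]_(n, p)) :
  adjmx (A *m B) = adjmx B *m adjmx A.
Proof.
apply/matrixP=> i j; rewrite !mxE rmorph_sum; apply: eq_bigr => k _.
by rewrite !mxE rmorphM mulrC.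
Qed.

Lemma adjmx1 n : adjmx (1%:M : 'M[C]_n) = 1%:M.
Proof. by apply/matrixP=> i j; rewrite !mxE conjC_nat eq_sym. Qed.

Lemma adjmx_tens m n p q (A : 'M[C]_(m, n)) (B : 'M[C]_(p, q)) :
  adjmx (A *t B) = adjmx A *t adjmx B.
Proof. by rewrite /adjmx map_mxT trmx_tens. Qed.

Lemma tensmx11 m n : (1%:M : 'M[C]_m) *t (1%:M : 'M[C]_n) = 1%:M.
Proof.
apply/matrixP=> i j; case: (mxtens_indexP i) => i1 i2; case: (mxtens_indexP j) => j1 j2.
rewrite tensmxE !mxE -natrM (inj_eq (can_inj (@mxtens_indexK m n))) xpair_eqE.
by rewrite mulnb.
Qed.

Lemma eq_mxtens_indexR m n (i i' : 'I_m) (j j' : 'I_n) :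
  ((tix i j == tix i' j')%:R : C) = (i == i')%:R * (j == j')%:R.
Proof.
by rewrite (inj_eq (can_inj (@mxtens_indexK m n))) xpair_eqE -natrM mulnb.
Qed.

Definition unitary n (U : 'M[C]_n) : Prop := adjmx U *m U = 1%:M.

Lemma unitary_mulmx_adj n (U : 'M[C]_n) : unitary U -> U *m adjmx U = 1%:M.
Proof. exact: mulmx1C. Qed.

Lemma unitary1 n : unitary (1%:M : 'M[C]_n).
Proof. by rewrite /unitary adjmx1 mulmx1. Qed.

Lemma unitary_tens m n (A : 'M[C]_m) (B : 'M[C]_n) :
  unitary A -> unitary B -> unitary (A *t B).
Proof. by move=> hA hB; rewrite /unitary adjmx_tens tensmx_mul hA hB tensmx11. Qed.

Lemma unitary_conj n (U : 'M[C]_n) : unitary U -> unitary (map_mx Num.conj U).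
Proof.
rewrite /unitary => hU; apply/matrixP=> j k; have /matrixP/(_ j k) := hU.
rewrite !mxE => e; rewrite -[RHS]conjC_nat -e rmorph_sum.
by apply: eq_bigr => i _; rewrite !mxE rmorphM.
Qed.

End Adjoint.

Section TraceNorm.
Variable C : numClosedFieldType.

Lemma char_poly_similar n (U V A : 'M[C]_n) : V *m U = 1%:M ->
  char_poly (U *m A *m V) = char_poly A.
Proof.
move=> VU; have UV := mulmx1C VU; rewrite /char_poly.
have -> : char_poly_mx (U *m A *m V) =
    map_mx (@polyC C) U *m char_poly_mx A *m map_mx (@polyC C) V.
  rewrite /char_poly_mx mulmxBr mulmxBl !map_mxM; congr (_ - _).
  by rewrite scalar_mxC -mulmxA -map_mxM UV map_mx1 mulmx1.
rewrite !det_mulmx mulrC mulrA -det_mulmx -map_mxM VU map_mx1.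
by rewrite det1 mul1r.
Qed.

Lemma trnorm_unitary_conj n (U M : 'M[C]_n) : unitary U ->
  trnorm (U *m M *m adjmx U) = trnorm M.
Proof.
move=> hU; rewrite /trnorm !adjmxM adjmxK.
have -> : U *m (adjmx M *m adjmx U) *m (U *m M *m adjmx U) =
    U *m (adjmx M *m M) *m adjmx U.
  by rewrite !mulmxA -[_ *m adjmx U *m U]mulmxA hU mulmx1.
by rewrite char_poly_similar.
Qed.

Lemma poly_roots_prod_XsubC (r : seq C) :
  perm_eq (poly_roots (\prod_(z <- r) ('X - z%:P))) r.
Proof.
rewrite /poly_roots; case: (closed_field_poly_normal _) => s /= hs.
have /monicP lc1 : \prod_(z <- r) ('X - z%:P) \is monic by exact: monic_prod_XsubC.
by apply: prod_XsubC_eq; rewrite lc1 scale1r in hs; rewrite -hs.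
Qed.

Lemma trnorm_adj_diag n (M : 'M[C]_n) (r : 'rV[C]_n) : adjmx M *m M = diag_mx r ->
  trnorm M = \sum_i sqrtC (r 0 i).
Proof.
move=> e; rewrite /trnorm e char_poly_trig ?diag_mx_is_trig //.
rewrite -(big_map (fun i => diag_mx r i i) xpredT (fun z => 'X - z%:P)).
rewrite (perm_big _ (poly_roots_prod_XsubC _)) big_map.
by apply: eq_bigr => i _; rewrite mxE eqxx mulr1n.
Qed.

Section InvolutiveSupport.
Variables (n : nat) (M : 'M[C]_n) (sg : 'I_n -> 'I_n).
Hypotheses (sgK : involutive sg) (M_supp : forall i j, j != sg i -> M i j = 0).

Lemma col_support i j : i != sg j -> M i j = 0.
Proof. by move=> ne; apply: M_supp; apply: contra ne => /eqP->; rewrite sgK. Qed.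

Lemma sum_col_support j (f : C -> C) : f 0 = 0 ->
  \sum_i f (M i j) = f (M (sg j) j).
Proof.
move=> f0; rewrite (bigD1 (sg j)) //= big1 ?addr0 // => i ne.
by rewrite col_support.
Qed.

Lemma adj_mul_involutive_support :
  adjmx M *m M = diag_mx (\row_j `|M (sg j) j| ^+ 2).
Proof.
apply/matrixP=> j k; rewrite !mxE; case: (eqVneq j k) => [<-|ne].
  rewrite mulr1n normCKC -(sum_col_support j (f := fun x => x^* * x)).
    by apply: eq_bigr => i _; rewrite !mxE.
  by rewrite conjC0 mul0r.
rewrite mulr0n big1 // => i _; rewrite !mxE.
case: (eqVneq j (sg i)) => [ej|nj]; last by rewrite M_supp // conjC0 mul0r.
by rewrite (M_supp (j := k)) ?mulr0 // -ej eq_sym.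
Qed.

Lemma trnorm_involutive_support : trnorm M = \sum_i \sum_j `|M i j|.
Proof.
rewrite (trnorm_adj_diag adj_mul_involutive_support) exchange_big /=.
apply: eq_bigr => j _; rewrite mxE sqrCK // (sum_col_support j (f := fun x => `|x|)) //.
exact: normr0.
Qed.

End InvolutiveSupport.

End TraceNorm.

Section PartialTranspose.
Variable C : numClosedFieldType.

Lemma ptrans_midE a b c (M : 'M[C]_(a * b * c)) ia ix ib ja jx jb :
  ptrans_mid M (tix (tix ia ix) ib) (tix (tix ja jx) jb) =
  M (tix (tix ia jx) ib) (tix (tix ja ix) jb).
Proof. by rewrite mxE !mxtens_indexK. Qed.

Lemma ptrans_24E a b c e (M : 'M[C]_(a * b * (c * e))) ia ix ib iy ja jx jb jy :
  ptrans_24 M (tix (tix ia ix) (tix ib iy)) (tix (tix ja jx) (tix jb jy)) =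
  M (tix (tix ia jx) (tix ib jy)) (tix (tix ja ix) (tix jb iy)).
Proof. by rewrite mxE !mxtens_indexK. Qed.

Lemma sum_local_mid_row a b c (A : 'M[C]_a) (B : 'M[C]_c) ia (ix : 'I_b) ib
    (f : 'I_(a * b * c) -> C) :
  \sum_p ((A *t (1%:M : 'M_b)) *t B) (tix (tix ia ix) ib) p * f p =
  \sum_pa \sum_pb A ia pa * B ib pb * f (tix (tix pa ix) pb).
Proof.
rewrite !big_mxtens_index; apply: eq_bigr => pa _.
rewrite exchange_big /=; apply: eq_bigr => pb _.
under eq_bigr do rewrite !tensmxE mxE.
rewrite (bigD1 ix) //= eqxx mulr1 big1 ?addr0 // => px.
by rewrite eq_sym => /negbTE->; rewrite mulr0 !mul0r.
Qed.

Lemma sum_local_mid_col a b c (A : 'M[C]_a) (B : 'M[C]_c) ja (jx : 'I_b) jb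
    (f : 'I_(a * b * c) -> C) :
  \sum_q f q * ((A *t (1%:M : 'M_b)) *t B) q (tix (tix ja jx) jb) =
  \sum_qa \sum_qb f (tix (tix qa jx) qb) * (A qa ja * B qb jb).
Proof.
transitivity (\sum_q ((A *t (1%:M : 'M_b)) *t B)^T (tix (tix ja jx) jb) q * f q).
  by apply: eq_bigr => q _; rewrite [X in _ = X * _]mxE mulrC.
rewrite !trmx_tens trmx1 sum_local_mid_row.
by apply: eq_bigr => qa _; apply: eq_bigr => qb _; rewrite !mxE mulrC.
Qed.

Lemma sum_local_24_row a b c e (A : 'M[C]_a) (B : 'M[C]_c) ia (ix : 'I_b) ib
    (iy : 'I_e) (f : 'I_(a * b * (c * e)) -> C) :
  \sum_p ((A *t (1%:M : 'M_b)) *t (B *t (1%:M : 'M_e)))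
      (tix (tix ia ix) (tix ib iy)) p * f p =
  \sum_pa \sum_pb A ia pa * B ib pb * f (tix (tix pa ix) (tix pb iy)).
Proof.
rewrite !big_mxtens_index; apply: eq_bigr => pa _.
rewrite (bigD1 ix) //= [X in _ + X]big1 ?addr0; last first.
  move=> px ne; rewrite big1 // => p2 _; rewrite !tensmxE [1%:M _ px]mxE.
  by rewrite eq_sym (negbTE ne) !(mulr0, mul0r).
rewrite big_mxtens_index; apply: eq_bigr => pb _.
rewrite (bigD1 iy) //= [X in _ + X]big1 ?addr0; last first.
  move=> py ne; rewrite !tensmxE [1%:M _ py]mxE.
  by rewrite eq_sym (negbTE ne) !(mulr0, mul0r).
by rewrite !tensmxE !mxE !eqxx !mulr1.
Qed.

Lemma sum_local_24_col a b c e (A : 'M[C]_a) (B : 'M[C]_c) ja (jx : 'I_b) jb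
    (jy : 'I_e) (f : 'I_(a * b * (c * e)) -> C) :
  \sum_q f q * ((A *t (1%:M : 'M_b)) *t (B *t (1%:M : 'M_e)))
      q (tix (tix ja jx) (tix jb jy)) =
  \sum_qa \sum_qb f (tix (tix qa jx) (tix qb jy)) * (A qa ja * B qb jb).
Proof.
transitivity (\sum_q ((A *t (1%:M : 'M_b)) *t (B *t (1%:M : 'M_e)))^T
                 (tix (tix ja jx) (tix jb jy)) q * f q).
  by apply: eq_bigr => q _; rewrite [X in _ = X * _]mxE mulrC.
rewrite !trmx_tens !trmx1 sum_local_24_row.
by apply: eq_bigr => qa _; apply: eq_bigr => qb _; rewrite !mxE mulrC.
Qed.

Section MiddleFactor.
Variables (a b c : nat) (A : 'M[C]_a) (B : 'M[C]_c).
Let F := (A *t (1%:M : 'M[C]_b)) *t B.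

Lemma ptrans_mid_mull Y : ptrans_mid (F *m Y) = F *m ptrans_mid Y.
Proof.
apply/matrixP=> i j.
case: (mxtens_indexP i) => i1 ib; case: (mxtens_indexP i1) => ia ix.
case: (mxtens_indexP j) => j1 jb; case: (mxtens_indexP j1) => ja jx.
rewrite ptrans_midE [LHS]mxE [RHS]mxE !sum_local_mid_row.
by do 2!(apply: eq_bigr => ? _); rewrite ptrans_midE.
Qed.

Lemma ptrans_mid_mulr Y : ptrans_mid (Y *m F) = ptrans_mid Y *m F.
Proof.
apply/matrixP=> i j.
case: (mxtens_indexP i) => i1 ib; case: (mxtens_indexP i1) => ia ix.
case: (mxtens_indexP j) => j1 jb; case: (mxtens_indexP j1) => ja jx.
rewrite ptrans_midE [LHS]mxE [RHS]mxE !sum_local_mid_col.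
by do 2!(apply: eq_bigr => ? _); rewrite ptrans_midE.
Qed.

End MiddleFactor.

Lemma ptrans_mid_conj_local a b c (A : 'M[C]_a) (B : 'M[C]_c) Y :
  ptrans_mid (((A *t (1%:M : 'M_b)) *t B) *m Y *m adjmx ((A *t 1%:M) *t B)) =
  ((A *t 1%:M) *t B) *m ptrans_mid Y *m adjmx ((A *t 1%:M) *t B).
Proof. by rewrite !adjmx_tens adjmx1 ptrans_mid_mulr ptrans_mid_mull. Qed.

Section OuterFactors.
Variables (a b c e : nat) (A : 'M[C]_a) (B : 'M[C]_c).
Let F := (A *t (1%:M : 'M[C]_b)) *t (B *t (1%:M : 'M[C]_e)).

Lemma ptrans_24_mull Y : ptrans_24 (F *m Y) = F *m ptrans_24 Y.
Proof.
apply/matrixP=> i j.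
case: (mxtens_indexP i) => i1 i2; case: (mxtens_indexP i1) => ia ix.
case: (mxtens_indexP i2) => ib iy.
case: (mxtens_indexP j) => j1 j2; case: (mxtens_indexP j1) => ja jx.
case: (mxtens_indexP j2) => jb jy.
rewrite ptrans_24E [LHS]mxE [RHS]mxE !sum_local_24_row.
by do 2!(apply: eq_bigr => ? _); rewrite ptrans_24E.
Qed.

Lemma ptrans_24_mulr Y : ptrans_24 (Y *m F) = ptrans_24 Y *m F.
Proof.
apply/matrixP=> i j.
case: (mxtens_indexP i) => i1 i2; case: (mxtens_indexP i1) => ia ix.
case: (mxtens_indexP i2) => ib iy.
case: (mxtens_indexP j) => j1 j2; case: (mxtens_indexP j1) => ja jx.
case: (mxtens_indexP j2) => jb jy.
rewrite ptrans_24E [LHS]mxE [RHS]mxE !sum_local_24_col.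
by do 2!(apply: eq_bigr => ? _); rewrite ptrans_24E.
Qed.

End OuterFactors.

Lemma ptrans_24_conj_local a b c e (A : 'M[C]_a) (B : 'M[C]_c) Y :
  ptrans_24 (((A *t (1%:M : 'M_b)) *t (B *t (1%:M : 'M_e))) *m Y *m
             adjmx ((A *t 1%:M) *t (B *t 1%:M))) =
  ((A *t 1%:M) *t (B *t 1%:M)) *m ptrans_24 Y *m adjmx ((A *t 1%:M) *t (B *t 1%:M)).
Proof. by rewrite !adjmx_tens !adjmx1 ptrans_24_mulr ptrans_24_mull. Qed.

End PartialTranspose.

Section Measurement.
Variables (C : numClosedFieldType) (d : nat).

Definition basis_mx (s : 'I_d -> 'cV[C]_d) : 'M[C]_d := \matrix_(i, k) s k i 0.

Lemma ketE (k i : 'I_d) : ket C k i 0 = (i == k)%:R.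
Proof. by rewrite mxE andbT. Qed.

Lemma mulmx_ket m (M : 'M[C]_(m, d)) k i : (M *m ket C k) i 0 = M i k.
Proof. by rewrite -colE mxE. Qed.

Lemma basis_mx_ket s k : basis_mx s *m ket C k = s k.
Proof. by apply/matrixP=> i j; rewrite ord1 mulmx_ket mxE. Qed.

Lemma basis_mx_unitary s : orthonormal s -> unitary (basis_mx s).
Proof.
move=> hs; apply/matrixP=> j k; have /matrixP/(_ 0 0) := hs j k.
rewrite !mxE eqxx mulr1n => <-.
by apply: eq_bigr => i _; rewrite !mxE.
Qed.

Lemma ket_orthonormal : orthonormal (@ket C d).
Proof.
move=> j k; apply/matrixP=> x y; rewrite [x]ord1 [y]ord1 !mxE eqxx mulr1n.
rewrite (bigD1 j) //= big1 ?addr0 => [|i ne].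
  by rewrite adjmxE !ketE eqxx conjC1 mul1r.
by rewrite adjmxE !ketE (negbTE ne) conjC0 mul0r.
Qed.

Lemma measV_basis s : measV s =
  (basis_mx s *t (1%:M : 'M_d)) *m measV (@ket C d) *m adjmx (basis_mx s).
Proof.
rewrite /measV mulmx_sumr mulmx_suml; apply: eq_bigr => k _.
by rewrite !mulmxA tensmx_mul mul1mx basis_mx_ket -mulmxA -adjmxM basis_mx_ket.
Qed.

Lemma measV_stdE a b c : measV (@ket C d) (tix a b) c = (a == c)%:R * (b == c)%:R.
Proof.
rewrite /measV summxE (bigD1 c) //= big1 ?addr0 => [|k ne]; last first.
  rewrite mxE big1 // => z _.
  by rewrite adjmxE [ket _ _ _ _]mxE [c == k]eq_sym (negbTE ne) conjC0 mulr0.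
rewrite mxE (bigD1 0) //= big1 ?addr0 => [|z]; last by rewrite [z]ord1 eqxx.
rewrite adjmxE ketE eqxx conjC1 mulr1.
have -> : (0 : 'I_(1 * 1)) = tix 0 0 by apply: val_inj.
by rewrite tensmxE !ketE.
Qed.

End Measurement.

Lemma conj_selection_entry (C : numClosedFieldType) m n (P : 'M[C]_(m, n))
    (Z : 'M[C]_n) i j wi wj ki kj :
  (forall p, P i p = wi * (p == ki)%:R) -> (forall q, P j q = wj * (q == kj)%:R) ->
  (P *m Z *m adjmx P) i j = wi * Z ki kj * wj^*.
Proof.
move=> Pi Pj; rewrite mxE (bigD1 kj) //= big1 ?addr0 => [|q ne].
  rewrite adjmxE Pj eqxx mulr1 mxE (bigD1 ki) //= big1 ?addr0 => [|p ne].
    by rewrite Pi eqxx mulr1.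
  by rewrite Pi (negbTE ne) mulr0 mul0r.
by rewrite adjmxE Pj (negbTE ne) mulr0 conjC0 mulr0.
Qed.

Section StdNegativity.
Variables (C : numClosedFieldType) (d : nat).
Local Notation V := (measV (@ket C d)).

Lemma measV_std_tens1E a b m p :
  (V *t (1%:M : 'M_d)) (tix (tix a b) m) p = (a == b)%:R * (p == tix a m)%:R.
Proof.
case: (mxtens_indexP p) => c m'; rewrite tensmxE measV_stdE mxE eq_mxtens_indexR.
have [<-|_] := eqVneq a c; last by rewrite !(mulr0, mul0r).
by rewrite !mul1r [b == a]eq_sym [m' == m]eq_sym.
Qed.

Lemma measV_std_tensE a b m n p :
  (V *t V) (tix (tix a b) (tix m n)) p = (a == b)%:R * (m == n)%:R * (p == tix a m)%:R.
Proof.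
case: (mxtens_indexP p) => c m'; rewrite tensmxE !measV_stdE eq_mxtens_indexR.
have [<-|_] := eqVneq a c; last by rewrite !(mulr0, mul0r).
have [<-|_] := eqVneq m m'; last by rewrite !(mulr0, mul0r).
by rewrite !(mulr1, mul1r) [b == a]eq_sym [n == m]eq_sym.
Qed.

Section OneSided.
Variable Z : 'M[C]_(d * d).
Let M := ptrans_mid ((V *t (1%:M : 'M_d)) *m Z *m adjmx (V *t (1%:M : 'M_d))).

Lemma ptrans_mid_measE a b m a' b' m' :
  M (tix (tix a b) m) (tix (tix a' b') m') =
  (a == b')%:R * (a' == b)%:R * Z (tix a m) (tix a' m').
Proof.
rewrite /M ptrans_midE (conj_selection_entry _ (measV_std_tens1E _ _ _)
  (measV_std_tens1E _ _ _)) conjC_nat.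
by rewrite mulrAC.
Qed.

(* The only column in which row [x] of the measured, partially transposed state can
   be nonzero, when the state is supported on the diagonal and on the entries of the
   maximally entangled projector (hypothesis [Z_supp] below). *)
Definition mid_partner (x : 'I_(d * d * d)) : 'I_(d * d * d) :=
  let: (p, m) := mxtens_unindex x in let: (a, b) := mxtens_unindex p in
  if a == m then tix (tix b a) b else x.

Lemma mid_partnerE a b m :
  mid_partner (tix (tix a b) m) = if a == m then tix (tix b a) b else tix (tix a b) m.
Proof. by rewrite /mid_partner !mxtens_indexK. Qed.

Lemma mid_partnerK : involutive mid_partner.
Proof.
move=> x; case: (mxtens_indexP x) => p m; case: (mxtens_indexP p) => a b.
case: (eqVneq a m) => [<-|/negbTE ne].
  by rewrite mid_partnerE eqxx mid_partnerE eqxx.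
by rewrite mid_partnerE ne mid_partnerE ne.
Qed.

Hypothesis Z_supp : forall a m a' m', ~~ ((a == m) && (a' == m')) ->
  ~~ ((a == a') && (m == m')) -> Z (tix a m) (tix a' m') = 0.

Lemma ptrans_mid_meas_supp i j : j != mid_partner i -> M i j = 0.
Proof.
case: (mxtens_indexP i) => p m; case: (mxtens_indexP p) => a b.
case: (mxtens_indexP j) => q m'; case: (mxtens_indexP q) => a' b'.
rewrite mid_partnerE ptrans_mid_measE.
have [<-|_] := eqVneq a b'; last by rewrite !mul0r.
have [<-|_] := eqVneq a' b; last by rewrite mulr0 mul0r.
rewrite !mul1r => ne; case: (eqVneq a m) => [<-|nam] in ne *; apply: Z_supp.
- by rewrite eqxx; apply: contra ne => /eqP->.
- by apply: contra ne => /andP[/eqP <- /eqP <-].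
- by rewrite (negbTE nam).
- by apply: contra ne => /andP[/eqP <- /eqP <-].
Qed.

Lemma ptrans_mid_meas_rowsum a b m :
  \sum_y `|M (tix (tix a b) m) y| = \sum_m' `|Z (tix a m) (tix b m')|.
Proof.
rewrite !big_mxtens_index (bigD1 b) //= [X in _ + X]big1 ?addr0 => [|a' ne].
  rewrite (bigD1 a) //= [X in _ + X]big1 ?addr0 => [|b' ne].
    by apply: eq_bigr => m' _; rewrite ptrans_mid_measE !eqxx !mul1r.
  rewrite big1 // => m' _.
  by rewrite ptrans_mid_measE eq_sym (negbTE ne) !mul0r normr0.
rewrite big1 // => b' _; rewrite big1 // => m' _.
by rewrite ptrans_mid_measE eq_sym (negbTE ne) mulr0 mul0r normr0.
Qed.

Lemma negA_std_supp : negA (@ket C d) Z = (\sum_x \sum_y `|Z x y| - 1) / 2.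
Proof.
rewrite /negA -/M (trnorm_involutive_support mid_partnerK ptrans_mid_meas_supp).
congr ((_ - _) / _); rewrite big_mxtens_index [RHS]big_mxtens_index big_mxtens_index.
apply: eq_bigr => a _; under eq_bigr do under eq_bigr do rewrite ptrans_mid_meas_rowsum.
rewrite exchange_big /=; apply: eq_bigr => m _.
by rewrite big_mxtens_index.
Qed.

End OneSided.

Section TwoSided.
Variable Z : 'M[C]_(d * d).
Let M := ptrans_24 ((V *t V) *m Z *m adjmx (V *t V)).

Lemma ptrans_24_measE a b m n a' b' m' n' :
  M (tix (tix a b) (tix m n)) (tix (tix a' b') (tix m' n')) =
  (a == b')%:R * (m == n')%:R * ((a' == b)%:R * (m' == n)%:R) *
  Z (tix a m) (tix a' m').
Proof.
rewrite /M ptrans_24E (conj_selection_entry _ (measV_std_tensE _ _ _ _)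
  (measV_std_tensE _ _ _ _)) rmorphM !rmorph_nat.
by rewrite mulrAC.
Qed.

Definition outer_partner (x : 'I_(d * d * (d * d))) : 'I_(d * d * (d * d)) :=
  let: (p, q) := mxtens_unindex x in let: (a, b) := mxtens_unindex p in
  let: (m, n) := mxtens_unindex q in tix (tix b a) (tix n m).

Lemma outer_partnerE a b m n :
  outer_partner (tix (tix a b) (tix m n)) = tix (tix b a) (tix n m).
Proof. by rewrite /outer_partner !mxtens_indexK. Qed.

Lemma outer_partnerK : involutive outer_partner.
Proof.
move=> x; case: (mxtens_indexP x) => p q; case: (mxtens_indexP p) => a b.
by case: (mxtens_indexP q) => m n; rewrite !outer_partnerE.
Qed.

Lemma ptrans_24_meas_supp i j : j != outer_partner i -> M i j = 0.
Proof.
case: (mxtens_indexP i) => p q; case: (mxtens_indexP p) => a b.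
case: (mxtens_indexP q) => m n.
case: (mxtens_indexP j) => p' q'; case: (mxtens_indexP p') => a' b'.
case: (mxtens_indexP q') => m' n'.
rewrite outer_partnerE ptrans_24_measE.
have [<-|_] := eqVneq a b'; last by rewrite !mul0r.
have [<-|_] := eqVneq a' b; last by rewrite mul0r mulr0 mul0r.
have [<-|_] := eqVneq m n'; last by rewrite mulr0 !mul0r.
have [<-|_] := eqVneq m' n; last by rewrite !(mulr0, mul0r).
by rewrite eqxx.
Qed.

Lemma ptrans_24_meas_rowsum a b m n :
  \sum_y `|M (tix (tix a b) (tix m n)) y| = `|Z (tix a m) (tix b n)|.
Proof.
rewrite (bigD1 (outer_partner (tix (tix a b) (tix m n)))) //= big1 ?addr0.
  by rewrite outer_partnerE ptrans_24_measE !eqxx !mul1r.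
by move=> y ne; rewrite ptrans_24_meas_supp ?normr0.
Qed.

Lemma negAB_std : negAB (@ket C d) (@ket C d) Z = (\sum_x \sum_y `|Z x y| - 1) / 2.
Proof.
rewrite /negAB -/M (trnorm_involutive_support outer_partnerK ptrans_24_meas_supp).
congr ((_ - _) / _); rewrite big_mxtens_index [RHS]big_mxtens_index big_mxtens_index.
apply: eq_bigr => a _; under eq_bigr do rewrite big_mxtens_index.
under eq_bigr do under eq_bigr do under eq_bigr do rewrite ptrans_24_meas_rowsum.
rewrite exchange_big /=; apply: eq_bigr => m _.
by rewrite big_mxtens_index.
Qed.

End TwoSided.

End StdNegativity.

Section BasisChange.
Variables (C : numClosedFieldType) (d : nat).

(* The ancilla may be rotated by any unitary [T]: the identity on it is [T 1 T^*]. *)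
Lemma negA_basis_change (s : 'I_d -> 'cV[C]_d) (T : 'M[C]_d) rho :
  orthonormal s -> unitary T ->
  negA s rho =
  negA (@ket C d) (adjmx (basis_mx s *t T) *m rho *m (basis_mx s *t T)).
Proof.
move=> hs hT; set S := basis_mx s; set G := S *t T.
set F := (S *t (1%:M : 'M_d)) *t T; set P := measV (@ket C d) *t (1%:M : 'M_d).
have hF : unitary F.
  by do 2?apply: unitary_tens => //; [exact: basis_mx_unitary | exact: unitary1].
have hW : measV s *t (1%:M : 'M_d) = F *m P *m adjmx G.
  have e1 : (1%:M : 'M_d) = T *m 1%:M *m adjmx T by rewrite mulmx1 unitary_mulmx_adj.
  by rewrite measV_basis [X in _ *t X]e1 -!tensmx_mul /G adjmx_tens.
rewrite /negA hW !adjmxM adjmxK -/P.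
have -> : F *m P *m adjmx G *m rho *m (G *m (adjmx P *m adjmx F)) =
    F *m (P *m (adjmx G *m rho *m G) *m adjmx P) *m adjmx F by rewrite !mulmxA.
by rewrite (ptrans_mid_conj_local (b := d) S T) (trnorm_unitary_conj _ hF).
Qed.

Lemma negAB_basis_change (sA sB : 'I_d -> 'cV[C]_d) rho :
  orthonormal sA -> orthonormal sB ->
  negAB sA sB rho = negAB (@ket C d) (@ket C d)
    (adjmx (basis_mx sA *t basis_mx sB) *m rho *m (basis_mx sA *t basis_mx sB)).
Proof.
move=> hsA hsB; set G := basis_mx sA *t basis_mx sB.
set F := (basis_mx sA *t (1%:M : 'M_d)) *t (basis_mx sB *t (1%:M : 'M_d)).
set P := measV (@ket C d) *t measV (@ket C d).
have hF : unitary F.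
  have [hA hB] := (basis_mx_unitary hsA, basis_mx_unitary hsB).
  by apply: unitary_tens; apply: unitary_tens => //; exact: unitary1.
have hW : measV sA *t measV sB = F *m P *m adjmx G.
  by rewrite (measV_basis sA) (measV_basis sB) -!tensmx_mul /G adjmx_tens.
rewrite /negAB hW !adjmxM adjmxK -/P.
have -> : F *m P *m adjmx G *m rho *m (G *m (adjmx P *m adjmx F)) =
    F *m (P *m (adjmx G *m rho *m G) *m adjmx P) *m adjmx F by rewrite !mulmxA.
by rewrite (ptrans_24_conj_local (b := d) (e := d) (basis_mx sA) (basis_mx sB))
  (trnorm_unitary_conj _ hF).
Qed.

End BasisChange.

Section MaxEntangled.
Variables (C : numClosedFieldType) (d : nat).
Local Notation phi := (max_ent C d).
Local Notation c := (sqrtC (d%:R : C))^-1.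

Lemma max_entE k m : phi (tix k m) 0 = c * (k == m)%:R.
Proof.
rewrite mxE summxE; congr (_ * _).
have -> : (0 : 'I_(1 * 1)) = tix 0 0 by apply: val_inj.
rewrite (bigD1 k) //= big1 ?addr0 => [|i ne].
  by rewrite tensmxE !ketE eqxx mul1r eq_sym.
by rewrite tensmxE !ketE eq_sym (negbTE ne) mul0r.
Qed.

Lemma adj_tens_max_entE (A B : 'M[C]_d) k m :
  (adjmx (A *t B) *m phi) (tix k m) 0 = c * \sum_i (A i k)^* * (B i m)^*.
Proof.
rewrite -scalemxAr mxE mulmx_sumr summxE; congr (_ * _); apply: eq_bigr => i _.
have -> : (0 : 'I_(1 * 1)) = tix 0 0 by apply: val_inj.
by rewrite adjmx_tens tensmx_mul tensmxE !mulmx_ket !adjmxE.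
Qed.

Lemma max_ent_conj_invariant (U : 'M[C]_d) : unitary U ->
  adjmx (U *t map_mx Num.conj U) *m phi = phi.
Proof.
move=> hU; apply/matrixP=> x z; rewrite [z]ord1.
case: (mxtens_indexP x) => k m; rewrite adj_tens_max_entE max_entE; congr (_ * _).
have /matrixP/(_ k m) := hU; rewrite !mxE => <-.
by apply: eq_bigr => i _; rewrite !mxE conjCK.
Qed.

Lemma conj_Phi_scalar (G : 'M[C]_(d * d)) (al be : C) : unitary G ->
  adjmx G *m (al *: Phi C d + be *: 1%:M) *m G =
  al *: ((adjmx G *m phi) *m adjmx (adjmx G *m phi)) + be *: 1%:M.
Proof.
move=> hG; have <- : adjmx G *m Phi C d *m G = (adjmx G *m phi) *m adjmx (adjmx G *m phi).
  by rewrite /Phi adjmxM adjmxK !mulmxA.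
rewrite mulmxDr mulmxDl -!scalemxAr -!scalemxAl mul_mx_scalar.
by rewrite -scalemxAl scale1r hG.
Qed.

Lemma adj_tens_max_ent_rownorm (A B : 'M[C]_d) k : unitary A -> unitary B ->
  \sum_m `|(adjmx (A *t B) *m phi) (tix k m) 0| ^+ 2 = d%:R^-1.
Proof.
move=> hA hB; set w := adjmx B *m map_mx Num.conj A *m ket C k.
have wE m : (adjmx (A *t B) *m phi) (tix k m) 0 = c * w m 0.
  rewrite adj_tens_max_entE mulmx_ket mxE; congr (_ * _).
  by apply: eq_bigr => i _; rewrite !mxE mulrC.
have w_norm : (adjmx w *m w) 0 0 = 1.
  rewrite /w !adjmxM adjmxK !mulmxA -[_ *m B *m adjmx B]mulmxA unitary_mulmx_adj //.
  rewrite mulmx1 -[adjmx (ket C k) *m _ *m _]mulmxA unitary_conj // mulmx1.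
  by rewrite (@ket_orthonormal C d k k) eqxx mxE eqxx.
rewrite -[RHS]mulr1 -[X in _ * X]w_norm mxE mulr_sumr; apply: eq_bigr => m _.
rewrite wE normrM exprMn adjmxE -normCKC ger0_norm ?invr_ge0 ?sqrtC_ge0 ?ler0n //.
by rewrite exprVn sqrtCK.
Qed.

Hypothesis d_gt0 : (0 < d)%N.

Lemma natr_d_neq0 : (d%:R : C) != 0.
Proof. by rewrite pnatr_eq0 -lt0n. Qed.

Lemma adj_tens_max_ent_norm (A B : 'M[C]_d) : unitary A -> unitary B ->
  \sum_x `|(adjmx (A *t B) *m phi) x 0| ^+ 2 = 1.
Proof.
move=> hA hB; rewrite big_mxtens_index.
under eq_bigr do rewrite adj_tens_max_ent_rownorm //.
by rewrite sumr_const card_ord -[_ *+ d]mulr_natl mulfV // natr_d_neq0.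
Qed.

Lemma sum_norm_max_ent_sqr : (\sum_x `|phi x 0|) ^+ 2 = d%:R.
Proof.
have row k : \sum_m `|phi (tix k m) 0| = c.
  rewrite (bigD1 k) //= big1 ?addr0 => [|m ne].
    by rewrite max_entE eqxx mulr1 ger0_norm // invr_ge0 sqrtC_ge0 ler0n.
  by rewrite max_entE eq_sym (negbTE ne) mulr0 normr0.
rewrite big_mxtens_index; under eq_bigr do rewrite row.
rewrite sumr_const card_ord -[_ *+ d]mulr_natl exprMn exprVn sqrtCK expr2 -mulrA.
by rewrite mulfV ?mulr1 // natr_d_neq0.
Qed.

End MaxEntangled.

Section RankOnePlusScalar.
Variable C : numClosedFieldType.

Lemma rank1_scalarE n (psi : 'cV[C]_n) (al be : C) x y :
  (al *: (psi *m adjmx psi) + be *: 1%:M) x y =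
  al * (psi x 0 * (psi y 0)^*) + be * (x == y)%:R.
Proof. by rewrite !mxE big_ord1 adjmxE. Qed.

Lemma ler_sum_term n (f : 'I_n -> C) i : (forall j, 0 <= f j) -> f i <= \sum_j f j.
Proof. by move=> f_ge0; rewrite (bigD1 i) //= lerDl sumr_ge0. Qed.

Lemma affine_ge0 (al be t : C) : al \is Num.real -> 0 <= be -> 0 <= al + be ->
  0 <= t <= 1 -> 0 <= al * t + be.
Proof.
move=> al_real be_ge0 albe_ge0 /andP[t_ge0 t_le1].
have [al_le0|al_ge0] := real_leP al_real (real0 C); last first.
  by rewrite addr_ge0 // mulr_ge0 // ltW.
by apply: le_trans albe_ge0 _; rewrite lerD2r -[X in X <= _]mulr1 ler_wnM2l.
Qed.

(* Diagonal entries of [al psi psi^* + be] are nonnegative, so only the off-diagonal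
   (rank-one) part contributes a norm. *)
Lemma sum_norm_rank1_scalar n (psi : 'I_n -> C) (al be : C) :
  (forall x, 0 <= al * `|psi x| ^+ 2 + be) ->
  \sum_x \sum_y `|al * (psi x * (psi y)^*) + be * (x == y)%:R| =
  al * \sum_x `|psi x| ^+ 2 + n%:R * be +
  `|al| * ((\sum_x `|psi x|) ^+ 2 - \sum_x `|psi x| ^+ 2).
Proof.
move=> diag_ge0; set S := \sum_x `|psi x|.
have row x : \sum_y `|al * (psi x * (psi y)^*) + be * (x == y)%:R| =
    al * `|psi x| ^+ 2 + be + `|al| * (`|psi x| * S - `|psi x| ^+ 2).
  rewrite (bigD1 x) //= eqxx mulr1 -normCK ger0_norm //; congr (_ + _).
  transitivity (`|al| * (`|psi x| * \sum_(y | y != x) `|psi y|)).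
    rewrite !mulr_sumr; apply: eq_bigr => y ne.
    by rewrite eq_sym (negbTE ne) mulr0 addr0 !normrM norm_conjC mulrA.
  by rewrite /S [in RHS](bigD1 x) //=; ring.
under eq_bigr do rewrite row.
rewrite !big_split /= -mulr_sumr sumr_const card_ord -[be *+ n]mulr_natl.
by rewrite -mulr_sumr sumrB -mulr_suml expr2 /S; ring.
Qed.

Lemma negativity_rank1_scalar n (psi : 'I_n -> C) (al be : C) :
  \sum_x `|psi x| ^+ 2 = 1 -> al \is Num.real -> 0 <= be -> 0 <= al + be ->
  al + n%:R * be = 1 ->
  (\sum_x \sum_y `|al * (psi x * (psi y)^*) + be * (x == y)%:R| - 1) / 2 =
  `|al| * ((\sum_x `|psi x|) ^+ 2 - 1) / 2.
Proof.
move=> psi_norm al_real be_ge0 albe_ge0 weights.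
rewrite sum_norm_rank1_scalar ?psi_norm ?mulr1 ?weights; first by rewrite addrAC subrr add0r.
move=> x; apply: affine_ge0 => //; rewrite exprn_ge0 //= -psi_norm.
by apply: (@ler_sum_term _ (fun y => `|psi y| ^+ 2) x) => y; rewrite exprn_ge0.
Qed.

Lemma sum_norm_ge n (psi : 'I_n -> C) (t : C) :
  \sum_x `|psi x| ^+ 2 = 1 -> (forall x, t * `|psi x| <= 1) -> t <= \sum_x `|psi x|.
Proof.
move=> psi_norm t_psi; rewrite -[t]mulr1 -psi_norm mulr_sumr.
apply: ler_sum => x _; rewrite expr2 mulrA -[X in _ <= X]mul1r.
exact: ler_wpM2r.
Qed.

End RankOnePlusScalar.

Section TwoSidedBound.
Variables (C : numClosedFieldType) (d : nat).
Hypothesis d_gt0 : (0 < d)%N.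
Variables (A B : 'M[C]_d).
Hypotheses (hA : unitary A) (hB : unitary B).
Local Notation psi := (adjmx (A *t B) *m max_ent C d).

Lemma adj_tens_max_ent_bound x : sqrtC (d%:R : C) * `|psi x 0| <= 1.
Proof.
have sd_ge0 : 0 <= sqrtC (d%:R : C) by rewrite sqrtC_ge0 ler0n.
rewrite -(expr_le1 (n := 2)) // ?mulr_ge0 // exprMn sqrtCK.
rewrite -[X in _ <= X](mulfV (natr_d_neq0 C d_gt0)) ler_wpM2l ?ler0n //.
case: (mxtens_indexP x) => k m; rewrite -(adj_tens_max_ent_rownorm k hA hB).
by apply: (@ler_sum_term _ _ (fun m => `|psi (tix k m) 0| ^+ 2) m) => y; exact: exprn_ge0.
Qed.

Lemma adj_tens_max_ent_sum_norm_ge : d%:R <= (\sum_x `|psi x 0|) ^+ 2.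
Proof.
have sd_ge0 : 0 <= sqrtC (d%:R : C) by rewrite sqrtC_ge0 ler0n.
have le_sum := sum_norm_ge (adj_tens_max_ent_norm d_gt0 hA hB) adj_tens_max_ent_bound.
rewrite -[X in X <= _](sqrtCK (d%:R : C)).
by apply: lerXn2r; rewrite ?nnegrE // (le_trans sd_ge0 le_sum).
Qed.

End TwoSidedBound.

Section Isotropic.
Variables (C : numClosedFieldType) (d : nat) (lam : C).
Local Notation rho := (isotropic d lam).
Local Notation be := ((1 - lam) / (d ^ 2 - 1)%:R).
Local Notation al := (lam - (1 - lam) / (d ^ 2 - 1)%:R).

Lemma isotropicE : rho = al *: Phi C d + be *: 1%:M.
Proof. by rewrite /isotropic scalerBr scalerBl addrCA addrC. Qed.

Lemma isotropic_conj_invariant (U : 'M[C]_d) : unitary U ->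
  adjmx (U *t map_mx Num.conj U) *m rho *m (U *t map_mx Num.conj U) = rho.
Proof.
move=> hU; rewrite isotropicE conj_Phi_scalar; last exact: unitary_tens (unitary_conj hU).
by rewrite max_ent_conj_invariant.
Qed.

Lemma isotropic_supp a m a' m' : ~~ ((a == m) && (a' == m')) ->
  ~~ ((a == a') && (m == m')) -> rho (tix a m) (tix a' m') = 0.
Proof.
rewrite isotropicE rank1_scalarE !max_entE eq_mxtens_indexR.
case: (a == m) (a' == m') (a == a') (m == m') => [] [] [] [] //= _ _;
  by rewrite !(mulr0, mul0r, addr0, conjC0).
Qed.

Hypotheses (d_gt1 : (1 < d)%N) (lam_ge0 : 0 <= lam) (lam_le1 : lam <= 1).

Let d_gt0 : (0 < d)%N. Proof. exact: ltnW. Qed.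

Lemma natr_sqr_sub1 : ((d ^ 2 - 1)%N%:R : C) = d%:R ^+ 2 - 1.
Proof. by rewrite natrB ?natrX // expn_gt0 d_gt0. Qed.

Lemma natr_sqr_sub1_gt0 : 0 < ((d ^ 2 - 1)%N%:R : C).
Proof. by rewrite ltr0n subn_gt0 -[1%N](exp1n 2) ltn_exp2r. Qed.

Lemma isotropic_be_ge0 : 0 <= be.
Proof. by rewrite divr_ge0 ?subr_ge0 // ltW // natr_sqr_sub1_gt0. Qed.

Lemma isotropic_al_real : al \is Num.real.
Proof. by rewrite rpredB // ger0_real // isotropic_be_ge0. Qed.

Lemma isotropic_weights : al + (d * d)%:R * be = 1.
Proof.
have k_neq0 := lt0r_neq0 natr_sqr_sub1_gt0.
rewrite natrM -expr2 -[d%:R ^+ 2](subrK 1) -natr_sqr_sub1.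
by field.
Qed.

Lemma isotropic_value :
  `|al| * (d%:R - 1) / 2 = `|lam * (d ^ 2)%:R - 1| / (2 * (d + 1)%:R).
Proof.
have k_gt0 := natr_sqr_sub1_gt0.
have -> : al = (lam * (d ^ 2)%:R - 1) / (d ^ 2 - 1)%N%:R.
  rewrite natrX -[d%:R ^+ 2](subrK 1) -natr_sqr_sub1.
  by field; rewrite lt0r_neq0.
rewrite normf_div (gtr0_norm k_gt0) natr_sqr_sub1 natrX natrD.
have dB1_neq0 : (d%:R : C) - 1 != 0 by rewrite subr_eq0 pnatr_eq1 gtn_eqF.
have dD1_neq0 : (d%:R : C) + 1 != 0 by rewrite natr1 pnatr_eq0.
field.
by rewrite dD1_neq0 -natr_sqr_sub1 lt0r_neq0.
Qed.

Lemma isotropic_std_value : (\sum_x \sum_y `|rho x y| - 1) / 2 =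
  `|lam * (d ^ 2)%:R - 1| / (2 * (d + 1)%:R).
Proof.
rewrite isotropicE; under eq_bigr do under eq_bigr do rewrite rank1_scalarE.
rewrite (negativity_rank1_scalar (psi := fun x => max_ent C d x 0)).
- by rewrite sum_norm_max_ent_sqr ?isotropic_value.
- have := adj_tens_max_ent_norm d_gt0 (unitary1 C d) (unitary1 C d).
  by rewrite tensmx11 adjmx1 mul1mx.
- exact: isotropic_al_real.
- exact: isotropic_be_ge0.
- by rewrite subrK.
- exact: isotropic_weights.
Qed.

Lemma negA_isotropic s : orthonormal s ->
  negA s rho = `|lam * (d ^ 2)%:R - 1| / (2 * (d + 1)%:R).
Proof.
move=> hs; have hS := basis_mx_unitary hs.
rewrite (negA_basis_change _ hs (unitary_conj hS)) isotropic_conj_invariant //.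
by rewrite negA_std_supp ?isotropic_std_value //; exact: isotropic_supp.
Qed.

Lemma negAB_isotropic_std :
  negAB (@ket C d) (@ket C d) rho = `|lam * (d ^ 2)%:R - 1| / (2 * (d + 1)%:R).
Proof. by rewrite negAB_std isotropic_std_value. Qed.

Lemma negAB_isotropic_ge sA sB : orthonormal sA -> orthonormal sB ->
  `|lam * (d ^ 2)%:R - 1| / (2 * (d + 1)%:R) <= negAB sA sB rho.
Proof.
move=> hsA hsB; have [hA hB] := (basis_mx_unitary hsA, basis_mx_unitary hsB).
rewrite negAB_basis_change // isotropicE conj_Phi_scalar; last exact: unitary_tens.
rewrite negAB_std; under eq_bigr do under eq_bigr do rewrite rank1_scalarE.
rewrite negativity_rank1_scalar ?adj_tens_max_ent_norm ?isotropic_al_real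
  ?isotropic_be_ge0 ?subrK ?isotropic_weights // -isotropic_value.
rewrite ler_wpM2r ?invr_ge0 ?ler0n // ler_wpM2l // lerD2r.
exact: adj_tens_max_ent_sum_norm_ge.
Qed.

End Isotropic.

Lemma normc_real (R : realType) (x : R) : `|(x%:C)%C| = ((`|x|)%:C)%C.
Proof. by rewrite normc_def /= expr0n /= addr0 sqrtr_sqr. Qed.

Lemma isotropic_value_complex (R : realType) d (lam : R) :
  ((`|lam * (d ^ 2)%:R - 1| / (2 * (d + 1)%:R))%:C)%C =
  `|(lam%:C)%C * (d ^ 2)%:R - 1| / (2 * (d + 1)%:R) :> R[i].
Proof.
have realcM (x y : R) : ((x * y)%:C = x%:C * y%:C)%C := rmorphM (real_complex R) x y.
have realcB (x y : R) : ((x - y)%:C = x%:C - y%:C)%C := rmorphB (real_complex R) x y.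
have realcV (x : R) : ((x^-1)%:C = (x%:C)^-1)%C := fmorphV (real_complex R) x.
have realc_nat n : (((n%:R : R)%:C) = n%:R)%C := rmorph_nat (real_complex R) n.
by rewrite realcM realcV -normc_real realcB !realcM !realc_nat.
Qed.

Theorem theorem14 (R : realType) (d : nat) (lam : R) :
  (2 <= d)%N -> 0 <= lam <= 1 ->
  let rho := isotropic d (lam%:C)%C in
  let q := ((`|lam * (d ^ 2)%:R - 1| / (2 * (d + 1)%:R))%:C)%C in
  is_QA rho q /\ is_QAB rho q.
Proof.
move=> d_gt1 /andP[lam_ge0 lam_le1] rho q.
have lamC_ge0 : 0 <= (lam%:C)%C :> R[i] by rewrite ler0c.
have lamC_le1 : (lam%:C)%C <= 1 :> R[i] by rewrite -(rmorph1 (real_complex R)) lecR.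
rewrite /q isotropic_value_complex /rho.
have std := @ket_orthonormal R[i] d.
split; split.
- by exists (@ket R[i] d); last exact: negA_isotropic.
- by move=> s hs; rewrite negA_isotropic.
- by exists (@ket R[i] d, @ket R[i] d); last exact: negAB_isotropic_std.
- by move=> [sA sB] [/= hA hB]; exact: negAB_isotropic_ge.
Qed.
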